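(* The set $\mathfrak T=\mathfrak T_\infty\cup\mathfrak T_\boxplus$ of green graph rewriting rules finitely leads to the red spider.
   Context: Fix a positive integer $s$ and let $\mathbb S=\{1,\dots,s\}$ and $\bar{\mathbb S}=\mathbb S\cup\{\emptyset\}$ (elements of $\mathbb S$ are natural numbers, called labels). A green graph is a (finite or infinite) relational structure over the signature consisting of binary relations $H_i$, $i\in\bar{\mathbb S}$; an atom $H_i(x,y)$ is called an edge from $x$ to $y$ labelled $i$. A green graph rewriting rule is a first-order sentence of one of the following two kinds, where $I_1,I_2,I_3,I_4\in\bar{\mathbb S}\setminus\{3,4\}$, $I_1\neq I_3$ and $I_2\neq I_4$: (end-sharing rule) $[I_1,I_2\leftrightarrow I_3,I_4]_{\mathrm{end}}$ denotes $\forall x,x'\,\big[(\exists y\,H_{I_1}(x,y)\wedge H_{I_2}(x',y))\Leftrightarrow(\exists y\,H_{I_3}(x,y)\wedge H_{I_4}(x',y))\big]$; (start-sharing rule) $[I_1,I_2\leftrightarrow I_3,I_4]_{\mathrm{start}}$ denotes $\forall y,y'\,\big[(\exists x\,H_{I_1}(x,y)\wedge H_{I_2}(x,y'))\Leftrightarrow(\exists x\,H_{I_3}(x,y)\wedge H_{I_4}(x,y'))\big]$. A green graph contains a 1-2 pattern if it has edges $H_1(a,b)$ and $H_2(a',b)$ for some vertices $a,a',b$. A set $\mathcal T$ of green graph rewriting rules leads to the red spider (resp. finitely leads to the red spider) if every green graph (resp. every finite green graph) $\mathbb D$ with $\mathbb D\models\mathcal T$ which contains at least one edge labelled $\emptyset$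 also contains a 1-2 pattern. Labels: $\alpha,\beta_0,\eta_0$ are pairwise distinct even elements and $\beta_1,\eta_1$ distinct odd elements of $\mathbb S\setminus\{1,2,3,4\}$. Further, the 32 codes $\langle x,\theta,\delta,\epsilon\rangle$ with $x\in\{n,e,s,w\}$, $\theta\in\{\alpha,\beta\}$, $\delta\in\{d,\bar d\}$, $\epsilon\in\{b,\bar b\}$ are identified injectively with elements of $\mathbb S\setminus\{3,4,\alpha,\beta_0,\beta_1,\eta_0,\eta_1\}$, in such a way that $\langle n,\alpha,\bar d,\bar b\rangle=1$ and $\langle w,\alpha,\bar d,\bar b\rangle=2$. $\mathfrak T_\infty$ consists of the three rules $[\emptyset,\emptyset\leftrightarrow\alpha,\eta_1]_{\mathrm{end}}$, $[\emptyset,\eta_1\leftrightarrow\eta_0,\beta_1]_{\mathrm{start}}$, $[\emptyset,\eta_0\leftrightarrow\eta_1,\beta_0]_{\mathrm{end}}$. $\mathfrak T_\boxplus$ consists of the following 41 rules: $[\beta_0,\beta_0\leftrightarrow\langle n,\beta,d,b\rangle,\langle w,\beta,d,b\rangle]_{\mathrm{end}}$; $[\beta_1,\langle n,\beta,d,b\rangle\leftrightarrow\langle s,\beta,\bar d,b\rangle,\langle e,\beta,d,\bar b\rangle]_{\mathrm{start}}$; $[\beta_0,\langle s,\beta,\bar d,b\rangle\leftrightarrow\langle n,\beta,\bar d,b\rangle,\langle w,\beta,\bar d,\bar b\rangle]_{\mathrm{end}}$; $[\beta_1,\langle n,\beta,\bar d,b\rangle\leftrightarrow\langle s,\beta,\bar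 d,b\rangle,\langle e,\beta,\bar d,\bar b\rangle]_{\mathrm{start}}$; $[\alpha,\langle s,\beta,\bar d,b\rangle\leftrightarrow\langle n,\beta,\bar d,b\rangle,\langle w,\alpha,\bar d,\bar b\rangle]_{\mathrm{end}}$; $[\beta_1,\langle w,\beta,d,b\rangle\leftrightarrow\langle e,\beta,\bar d,b\rangle,\langle s,\beta,d,\bar b\rangle]_{\mathrm{start}}$; $[\beta_0,\langle e,\beta,\bar d,b\rangle\leftrightarrow\langle w,\beta,\bar d,b\rangle,\langle n,\beta,\bar d,\bar b\rangle]_{\mathrm{end}}$; $[\beta_1,\langle w,\beta,\bar d,b\rangle\leftrightarrow\langle e,\beta,\bar d,b\rangle,\langle s,\beta,\bar d,\bar b\rangle]_{\mathrm{start}}$; $[\alpha,\langle e,\beta,\bar d,b\rangle\leftrightarrow\langle w,\beta,\bar d,b\rangle,\langle n,\alpha,\bar d,\bar b\rangle]_{\mathrm{end}}$; and, for all $X,Y\in\{d,\bar d\}$ and $\Theta,\Omega\in\{\alpha,\beta\}$, the rules $[\langle e,\Theta,X,\bar b\rangle,\langle s,\Omega,Y,\bar b\rangle\leftrightarrow\langle n,\Omega,X,\bar b\rangle,\langle w,\Theta,Y,\bar b\rangle]_{\mathrm{end}}$ and $[\langle w,\Theta,X,\bar b\rangle,\langle n,\Omega,Y,\bar b\rangle\leftrightarrow\langle s,\Omega,X,\bar b\rangle,\langle e,\Theta,Y,\bar b\rangle]_{\mathrm{start}}$. *)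

From mathcomp Require Import all_boot.
Set Implicit Arguments. Unset Strict Implicit. Unset Printing Implicit Defensive.

(* Labels: [Some i] is the label i (a natural number, i in S = {1..s}),
   [None] is the special label "emptyset". *)
Notation label := (option nat).

(* A green graph on vertex type V: H l x y is the edge atom H_l(x,y). *)
Definition green_graph (V : Type) := label -> V -> V -> Prop.

Definition end_rule (V : Type) (H : green_graph V) (I1 I2 I3 I4 : label) : Prop :=
  forall x x' : V,
    (exists y, H I1 x y /\ H I2 x' y) <-> (exists y, H I3 x y /\ H I4 x' y).

Definition start_rule (V : Type) (H : green_graph V) (I1 I2 I3 I4 : label) : Prop :=
  forall y y' : V,
    (exists x, H I1 x y /\ H I2 x y') <-> (exists x, H I3 x y /\ H I4 x y').

Definition has_12_pattern (V : Type) (H : green_graph V) : Prop :=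
  exists a a' b : V, H (Some 1) a b /\ H (Some 2) a' b.

Definition has_empty_edge (V : Type) (H : green_graph V) : Prop :=
  exists x y : V, H None x y.

Inductive dir := dN | dE | dS | dW.
Inductive theta := tAlpha | tBeta.
Inductive delta := dd | ddbar.
Inductive eps := eb | ebbar.

Definition T_infty (V : Type) (H : green_graph V)
    (alpha beta0 eta0 beta1 eta1 : nat) : Prop :=
  [/\ end_rule H None None (Some alpha) (Some eta1),
      start_rule H None (Some eta1) (Some eta0) (Some beta1)
    & end_rule H None (Some eta0) (Some eta1) (Some beta0)].

(* The rule set T_boxplus; [c] is the identification of codes with labels. *)
Definition T_boxplus (V : Type) (H : green_graph V)
    (alpha beta0 beta1 : nat) (c : dir -> theta -> delta -> eps -> nat) : Prop :=
  let C x t d e := Some (c x t d e) in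
  let A := Some alpha in let B0 := Some beta0 in let B1 := Some beta1 in
  end_rule H B0 B0 (C dN tBeta dd eb) (C dW tBeta dd eb) /\
      start_rule H B1 (C dN tBeta dd eb) (C dS tBeta ddbar eb) (C dE tBeta dd ebbar) /\
      end_rule H B0 (C dS tBeta ddbar eb) (C dN tBeta ddbar eb) (C dW tBeta ddbar ebbar) /\
      start_rule H B1 (C dN tBeta ddbar eb) (C dS tBeta ddbar eb) (C dE tBeta ddbar ebbar) /\
      end_rule H A (C dS tBeta ddbar eb) (C dN tBeta ddbar eb) (C dW tAlpha ddbar ebbar) /\
      start_rule H B1 (C dW tBeta dd eb) (C dE tBeta ddbar eb) (C dS tBeta dd ebbar) /\
      end_rule H B0 (C dE tBeta ddbar eb) (C dW tBeta ddbar eb) (C dN tBeta ddbar ebbar) /\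
      start_rule H B1 (C dW tBeta ddbar eb) (C dE tBeta ddbar eb) (C dS tBeta ddbar ebbar) /\
      end_rule H A (C dE tBeta ddbar eb) (C dW tBeta ddbar eb) (C dN tAlpha ddbar ebbar) /\
    (forall (X Y : delta) (Th Om : theta),
        end_rule H (C dE Th X ebbar) (C dS Om Y ebbar) (C dN Om X ebbar) (C dW Th Y ebbar)
        /\ start_rule H (C dW Th X ebbar) (C dN Om Y ebbar) (C dS Om X ebbar) (C dE Th Y ebbar)).

Definition in_S (s i : nat) : bool := (1 <= i <= s).

Definition admissible_labels (s alpha beta0 eta0 beta1 eta1 : nat)
    (c : dir -> theta -> delta -> eps -> nat) : Prop :=
      [&& ~~ odd alpha, ~~ odd beta0, ~~ odd eta0,
          alpha != beta0, alpha != eta0 & beta0 != eta0] /\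
      [&& odd beta1, odd eta1 & beta1 != eta1] /\
      all (fun i => in_S s i && (4 < i)) [:: alpha; beta0; eta0; beta1; eta1] /\
      (forall x1 t1 d1 e1 x2 t2 d2 e2,
          c x1 t1 d1 e1 = c x2 t2 d2 e2 -> [/\ x1 = x2, t1 = t2, d1 = d2 & e1 = e2]) /\
      (forall x t d e, in_S s (c x t d e) &&
          (c x t d e \notin [:: 3; 4; alpha; beta0; beta1; eta0; eta1])) /\
    c dN tAlpha ddbar ebbar = 1 /\ c dW tAlpha ddbar ebbar = 2.

From mathcomp Require Import all_boot.
From Stdlib Require Import ClassicalEpsilon.
Set Implicit Arguments. Unset Strict Implicit. Unset Printing Implicit Defensive.

(* From an emptyset-edge, the rules of T_infty produce an alpha-edge into a
   vertex q0 and an unbounded walk from q0 whose steps are a beta1-edge and a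
   beta0-edge leaving a common vertex.  In a finite graph two such walks, of
   lengths m+1 < n+1, end in a common vertex q.  At q the rules of T_boxplus
   start a grid: the longer walk generates its bottom row, the shorter one its
   left column, and the b-bar rules fill the cells row by row.  The alpha-edge
   at q0 ends the bottom row with a W-edge labelled alpha and caps the left
   column with an N-edge labelled alpha; both propagate through the grid and
   meet at the end of row m+1.  The d-marks run along the diagonal, which
   misses this point since m <> n, so the two edges carry the labels 1 and 2. *)

Section RuleApplication.
Variables (V : Type) (H : green_graph V).

Lemma end_rule_fwd I1 I2 I3 I4 x x' y :
  end_rule H I1 I2 I3 I4 -> H I1 x y -> H I2 x' y ->
  exists2 y', H I3 x y' & H I4 x' y'.
Proof.
by move=> R h1 h2; have [y' []] := (R x x').1 (ex_intro _ y (conj h1 h2)); exists y'.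
Qed.

Lemma start_rule_fwd I1 I2 I3 I4 x y y' :
  start_rule H I1 I2 I3 I4 -> H I1 x y -> H I2 x y' ->
  exists2 x', H I3 x' y & H I4 x' y'.
Proof.
by move=> R h1 h2; have [x' []] := (R y y').1 (ex_intro _ x (conj h1 h2)); exists x'.
Qed.

End RuleApplication.

Fixpoint walk (V : Type) (R : V -> V -> Prop) (k : nat) (x y : V) : Prop :=
  if k is k'.+1 then exists2 z, walk R k' x z & R z y else x = y.

Lemma serial_walks_meet (V : finType) (R : V -> V -> Prop) (S : V -> Prop) x :
  S x -> (forall y, S y -> exists2 z, S z & R y z) ->
  exists m n y, [/\ m < n, walk R m.+1 x y & walk R n.+1 x y].
Proof.
move=> Sx serial.
pose g y := epsilon (inhabits y) (fun z => S z /\ R y z).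
have gP y : S y -> S (g y) /\ R y (g y).
  by move=> /serial[z Sz Ryz]; apply: (epsilon_spec _ (fun z => S z /\ R y z)); exists z.
have iterP k : S (iter k g x) /\ walk R k x (iter k g x).
  elim: k => [|k [Sk Wk]] //=; have [Sgk Rgk] := gP _ Sk.
  by split=> //; exists (iter k g x).
have /trajectP[i lt_i_o eq_o_i] := looping_order g x.
have [Si Wi] := iterP i; have [_ Wo] := iterP (order g x).
have [_ Ri] := gP _ Si.
have Ro : R (iter (order g x) g x) (g (iter i g x)) by rewrite eq_o_i.
exists i, (order g x), (g (iter i g x)); split=> //.
- by exists (iter i g x).
- by exists (iter (order g x) g x).
Qed.

Section Grid.
Variables (V : Type) (H : green_graph V) (c : dir -> theta -> delta -> eps -> nat).

Definition code x t d e : label := Some (c x t d e).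

Hypothesis tiles : forall X Y Th Om,
  end_rule H (code dE Th X ebbar) (code dS Om Y ebbar)
             (code dN Om X ebbar) (code dW Th Y ebbar) /\
  start_rule H (code dW Th X ebbar) (code dN Om Y ebbar)
               (code dS Om X ebbar) (code dE Th Y ebbar).

Lemma tile_swap th th' ths thn X Y Z U r o y y' s :
  H (code dE th X ebbar) r y -> H (code dW th' Y ebbar) r y' ->
  H (code dS ths Z ebbar) o y -> H (code dN thn U ebbar) o s ->
  exists o' r' s', [/\ H (code dS ths Y ebbar) o' y', H (code dN thn X ebbar) o' s',
                      H (code dE th U ebbar) r' s & H (code dW th' Z ebbar) r' s'].
Proof.
move=> hE hW hS hN.
have [t hNr hWo] := end_rule_fwd (tiles X Z th ths).1 hE hS.
have [o' hSo' hEo'] := start_rule_fwd (tiles Y X th' ths).2 hW hNr.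
have [r' hSr' hEr'] := start_rule_fwd (tiles Z U th thn).2 hWo hN.
have [s' hNo' hWr'] := end_rule_fwd (tiles X Z th' thn).1 hEo' hSr'.
by exists o', r', s'.
Qed.

Definition alpha_corner := exists x x' y,
  H (code dN tAlpha ddbar ebbar) x y /\ H (code dW tAlpha ddbar ebbar) x' y.

Definition mark (b : bool) := if b then dd else ddbar.

Variable n : nat.

(* [row k j y]: cells j, ..., n of row k, the W-edge of each cell ending where
   the E-edge of the next one does, and y being the end of the E-edge of cell
   j.  The last W-edge is labelled alpha; the d-marks sit on the E-edge of cell
   k and the W-edge of cell k-1, i.e. on the diagonal. *)
Inductive row (k : nat) : nat -> V -> Prop :=
| row_last th r y y' :
    H (code dE th (mark (n == k)) ebbar) r y ->
    H (code dW tAlpha (mark (n.+1 == k)) ebbar) r y' -> row k n y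
| row_cons th th' j r y y' : j < n ->
    H (code dE th (mark (j == k)) ebbar) r y ->
    H (code dW th' (mark (j.+1 == k)) ebbar) r y' -> row k j.+1 y' -> row k j y.

Lemma row_succ k j y : row k j y -> forall o s ths thn,
  H (code dS ths (mark (j == k)) ebbar) o y ->
  H (code dN thn (mark (j == k.+1)) ebbar) o s ->
  row k.+1 j s /\ (thn = tAlpha -> k <> n -> alpha_corner).
Proof.
elim=> {j y} [th r y y' hE hW | th th' j r y y' lt_jn hE hW _ IH] o s ths thn hS hN.
- have [o' [r' [s' [_ hNo' hEr' hWr']]]] := tile_swap hE hW hS hN.
  split; first exact: row_last hEr' hWr'.
  move=> eq_thn neq_kn; subst thn; exists o', r', s'.
  have nk : (n == k) = false by apply/eqP=> /esym.
  by rewrite /mark nk in hNo' hWr'.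
- have [o' [r' [s' [hSo' hNo' hEr' hWr']]]] := tile_swap hE hW hS hN.
  have [row' top] := IH o' s' ths thn hSo' hNo'.
  by split=> //; exact: row_cons lt_jn hEr' hWr' row'.
Qed.

End Grid.

Section Walks.
Variables (V : Type) (H : green_graph V) (c : dir -> theta -> delta -> eps -> nat).
Variables (alpha beta0 beta1 : nat).
Let C := code c.
Let A := Some alpha.
Let B0 := Some beta0.
Let B1 := Some beta1.

Hypothesis R1 : end_rule H B0 B0 (C dN tBeta dd eb) (C dW tBeta dd eb).
Hypothesis R2 : start_rule H B1 (C dN tBeta dd eb) (C dS tBeta ddbar eb) (C dE tBeta dd ebbar).
Hypothesis R3 : end_rule H B0 (C dS tBeta ddbar eb) (C dN tBeta ddbar eb) (C dW tBeta ddbar ebbar).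
Hypothesis R4 : start_rule H B1 (C dN tBeta ddbar eb) (C dS tBeta ddbar eb) (C dE tBeta ddbar ebbar).
Hypothesis R5 : end_rule H A (C dS tBeta ddbar eb) (C dN tBeta ddbar eb) (C dW tAlpha ddbar ebbar).
Hypothesis R6 : start_rule H B1 (C dW tBeta dd eb) (C dE tBeta ddbar eb) (C dS tBeta dd ebbar).
Hypothesis R7 : end_rule H B0 (C dE tBeta ddbar eb) (C dW tBeta ddbar eb) (C dN tBeta ddbar ebbar).
Hypothesis R8 : start_rule H B1 (C dW tBeta ddbar eb) (C dE tBeta ddbar eb) (C dS tBeta ddbar ebbar).
Hypothesis R9 : end_rule H A (C dE tBeta ddbar eb) (C dW tBeta ddbar eb) (C dN tAlpha ddbar ebbar).
Hypothesis tiles : forall X Y Th Om,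
  end_rule H (C dE Th X ebbar) (C dS Om Y ebbar) (C dN Om X ebbar) (C dW Th Y ebbar)
  /\ start_rule H (C dW Th X ebbar) (C dN Om Y ebbar) (C dS Om X ebbar) (C dE Th Y ebbar).

Definition beta_step (x y : V) := exists p, H B1 p x /\ H B0 p y.

Variables (a q0 : V).
Hypothesis alpha_q0 : H A a q0.

Variable n : nat.

Lemma bottom_row l s u y j th : walk beta_step l q0 s -> j + l = n ->
  H (C dS tBeta ddbar eb) u s -> H (C dE th (mark (j == 0)) ebbar) u y ->
  row H c n 0 j y.
Proof.
elim: l s u y j th => [|l IH] s u y j th /=.
  move=> <-; rewrite addn0 => <- hS hE.
  have [y' _ hW] := end_rule_fwd R5 alpha_q0 hS.
  exact: row_last hE hW.
move=> [s' walk_s' [p [hp1 hp0]]] jl hS hE.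
have [w hN hW] := end_rule_fwd R3 hp0 hS.
have [u' hS' hE'] := start_rule_fwd R4 hp1 hN.
have lt_jn : j < n by rewrite -jl addnS ltnS leq_addr.
apply: (row_cons lt_jn hE hW).
by apply: (IH _ _ _ j.+1 tBeta walk_s' _ hS' hE'); rewrite addSnnS.
Qed.

Lemma left_column l e v k y th : walk beta_step l q0 e -> k + l < n ->
  H (C dE tBeta ddbar eb) v e -> H (C dS th (mark (0 == k)) ebbar) v y ->
  row H c n k 0 y -> alpha_corner H c.
Proof.
elim: l e v k y th => [|l IH] e v k y th /=.
  move=> <-; rewrite addn0 => lt_kn hE hS hrow.
  have [y' _ hN] := end_rule_fwd R9 alpha_q0 hE.
  have [_ top] := row_succ tiles hrow hS hN.
  by apply: top => // eq_kn; rewrite eq_kn ltnn in lt_kn.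
move=> [e' walk_e' [p [hp1 hp0]]] lt_kln hE hS hrow.
have [w hW hN] := end_rule_fwd R7 hp0 hE.
have [v' hE' hS'] := start_rule_fwd R8 hp1 hW.
have [hrow' _] := row_succ tiles hrow hS hN.
by apply: (IH _ _ k.+1 _ tBeta walk_e' _ hE' hS' hrow'); rewrite addSnnS.
Qed.

Lemma walks_alpha_corner m q :
  walk beta_step m.+1 q0 q -> walk beta_step n.+1 q0 q -> m < n -> alpha_corner H c.
Proof.
move=> [e walk_e [p' [hq1 hq0]]] [s walk_s [p [hp1 hp0]]] lt_mn.
have [z hN hW] := end_rule_fwd R1 hp0 hq0.
have [u hS hE] := start_rule_fwd R2 hp1 hN.
have [v hE' hS'] := start_rule_fwd R6 hq1 hW.
exact: (left_column (k:=0) walk_e lt_mn hE' hS' (bottom_row walk_s (add0n n) hS hE)).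
Qed.

End Walks.

Unset Implicit Arguments.

Theorem mainTheorem5 (s alpha beta0 eta0 beta1 eta1 : nat)
    (c : dir -> theta -> delta -> eps -> nat) :
  admissible_labels s alpha beta0 eta0 beta1 eta1 c ->
  forall (V : finType) (H : green_graph V),
    T_infty H alpha beta0 eta0 beta1 eta1 ->
    T_boxplus H alpha beta0 beta1 c ->
    has_empty_edge H ->
    has_12_pattern H.
Proof.
move=> [_ [_ [_ [_ [_ [c_nW c_wW]]]]]] V H [T1 T2 T3] TB [x0 [y0 empty]].
have [q0 alpha_q0 eta1_q0] := end_rule_fwd T1 empty empty.
have serial q : H (Some eta1) x0 q ->
    exists2 q', H (Some eta1) x0 q' & beta_step H beta0 beta1 q q'.
  move=> eta1_q; have [p eta0_p beta1_p] := start_rule_fwd T2 empty eta1_q.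
  have [q' eta1_q' beta0_p] := end_rule_fwd T3 empty eta0_p.
  by exists q' => //; exists p.
have [m [n [q [lt_mn walk_m walk_n]]]] := serial_walks_meet eta1_q0 serial.
move: TB => /= [R1 [R2 [R3 [R4 [R5 [R6 [R7 [R8 [R9 tiles]]]]]]]]].
have [x [x' [y []]]] :=
  walks_alpha_corner R1 R2 R3 R4 R5 R6 R7 R8 R9 tiles alpha_q0 walk_m walk_n lt_mn.
by rewrite /code c_nW c_wW; exists x, x', y.
Qed.
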